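(* For every nonnegative integer $n$ and complex parameters $\alpha,a$, \begin{align*} {}_3\phi_2\biggl({{q^{-n}, \alpha q^{n+1},q}\atop{q^2/a, 0}}; q, q\biggr) =q^{n^2+2n} \frac{(q, \alpha a; q)_n}{\bigl(q\alpha, q^2/a; q\bigr)_n} \Bigl(\frac{\alpha}{a}\Bigr)^n \sum_{j=0}^n \frac{\bigl(1-\alpha q^{2j}\bigr) (\alpha, q/a; q)_j (a/\alpha)^j q^{-j^2-j}}{(1-\alpha)(q, \alpha a; q)_j}. \end{align*}
   Context: Throughout, $q$ is a complex number with $0<|q|<1$. For $x\in\mathbb{C}$ and an integer $n\ge 0$, $(x;q)_n=\prod_{k=0}^{n-1}(1-xq^k)$, and $(x_1,\dots,x_m;q)_n=(x_1;q)_n\cdots(x_m;q)_n$. The basic hypergeometric series is ${}_r\phi_s\Bigl({{a_1,\dots,a_r}\atop{b_1,\dots,b_s}};q,z\Bigr)=\sum_{n=0}^\infty \frac{(a_1,\dots,a_r;q)_n}{(q,b_1,\dots,b_s;q)_n}\bigl((-1)^nq^{n(n-1)/2}\bigr)^{1+s-r}z^n$ (here a lower parameter $0$ means $(0;q)_n=1$). *)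

From Stdlib Require Import Reals ZArith List.
From Coquelicot Require Import Coquelicot.
Open Scope C_scope.

Fixpoint qpoch (x q : C) (n : nat) : C :=
  match n with
  | O => 1
  | S m => qpoch x q m * (1 - x * q ^ m)
  end.

Definition qpochs (xs : list C) (q : C) (n : nat) : C :=
  fold_right (fun x acc => qpoch x q n * acc) 1 xs.

Definition Czpow (x : C) (k : Z) : C :=
  match k with
  | Z0 => 1
  | Zpos p => x ^ Pos.to_nat p
  | Zneg p => / (x ^ Pos.to_nat p)
  end.

Definition phi_term (as_ bs : list C) (q z : C) (n : nat) : C :=
  qpochs as_ q n / qpochs (q :: bs) q n
  * Czpow ((- 1) ^ n * q ^ (n * (n - 1) / 2))
          (1 + Z.of_nat (length bs) - Z.of_nat (length as_))%Z
  * z ^ n.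

Definition is_phi (as_ bs : list C) (q z v : C) : Prop :=
  is_series (V := C_NormedModule) (phi_term as_ bs q z) v.

From Stdlib Require Import Reals ZArith List Lia Lra.
From Coquelicot Require Import Coquelicot.
Import ListNotations.
Open Scope C_scope.

(* The series terminates, since (q^-n;q)_k = 0 for k > n, so it suffices to prove the finite
   identity S_n = C_n (t_0 + ... + t_n), where S_n is the sum of the terms of the 3phi2 and
   C_n, t_j are the prefactor and the summands of the right-hand side.  This goes by induction
   on n via creative telescoping: for k <= n + 1,
     term_(n+1)(k) - K_n term_n(k) = G_n(k+1) - G_n(k)
   with explicit rational K_n ([ratio]) and certificate G_n ([cert]).  Summing over k, and
   using that G_n vanishes beyond n + 2 while term_n(n+1) = 0, gives
   S_(n+1) = K_n S_n - G_n(0); it remains to check the two rational identities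
   C_(n+1) = K_n C_n and C_(n+1) t_(n+1) = - G_n(0). *)

Lemma Csub_neq0_of_div (a y : C) : a <> 0 -> 1 - y / a <> 0 -> a - y <> 0.
Proof.
  intros Ha Hy. replace (a - y) with (a * (1 - y / a)) by (field; auto).
  apply Cmult_neq_0; auto.
Qed.

Lemma qpoch_succ (x q : C) (k : nat) : qpoch x q (S k) = qpoch x q k * (1 - x * q ^ k).
Proof. reflexivity. Qed.

Lemma qpoch_succ_head (x q : C) (k : nat) :
  qpoch x q (S k) = (1 - x) * qpoch (x * q) q k.
Proof.
  induction k as [|k IH]; [simpl; ring|].
  change (qpoch x q (S (S k))) with (qpoch x q (S k) * (1 - x * q ^ S k)).
  rewrite IH, Cpow_S. simpl. ring.
Qed.

Lemma qpoch_base_mulq (x q : C) (k : nat) :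
  1 - x <> 0 -> qpoch (x * q) q k = qpoch x q k * (1 - x * q ^ k) / (1 - x).
Proof. intros Hx. rewrite <- qpoch_succ, qpoch_succ_head. field. exact Hx. Qed.

Lemma qpoch_zero (q : C) (k : nat) : qpoch 0 q k = 1.
Proof. induction k as [|k IH]; simpl; [|rewrite IH]; ring. Qed.

Lemma qpoch_neq0 (x q : C) (k : nat) :
  (forall m, (m < k)%nat -> 1 - x * q ^ m <> 0) -> qpoch x q k <> 0.
Proof.
  induction k as [|k IH]; intros Hf; simpl.
  - intros E. injection E. lra.
  - apply Cmult_neq_0; [apply IH; intros m Hm|]; apply Hf; lia.
Qed.

Lemma qpoch_le_neq0 (x q : C) (j k : nat) :
  (j <= k)%nat -> qpoch x q k <> 0 -> qpoch x q j <> 0.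
Proof.
  induction 1 as [|k _ IH]; [auto|]. intros H E. apply IH; [|exact E].
  intros E'. apply H. simpl. rewrite E'. ring.
Qed.

Lemma qpoch_factor_neq0 (x q : C) (m k : nat) :
  (m < k)%nat -> qpoch x q k <> 0 -> 1 - x * q ^ m <> 0.
Proof.
  intros Hm H E. apply (qpoch_le_neq0 x q (S m) k Hm H). simpl. rewrite E. ring.
Qed.

Lemma qpoch_inv_pow_vanish (q : C) (n k : nat) :
  q <> 0 -> (n < k)%nat -> qpoch (/ q ^ n) q k = 0.
Proof.
  intros Hq. induction 1 as [|k _ IH]; simpl.
  - replace (1 - / q ^ n * q ^ n) with (RtoC 0) by (field; apply Cpow_nz, Hq). ring.
  - rewrite IH. ring.
Qed.

Lemma Cpow_neq1 (q : C) (m : nat) : (Cmod q < 1)%R -> (0 < m)%nat -> q ^ m <> 1.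
Proof.
  intros Hq Hm E. assert (H := Cmod_pow q m). rewrite E, Cmod_1 in H.
  assert (0 <= Cmod q)%R by apply Cmod_ge_0.
  assert (Cmod q ^ m < 1)%R by (apply pow_lt_1_compat; [lra|lia]).
  lra.
Qed.

Lemma qpoch_q_neq0 (q : C) (k : nat) : (Cmod q < 1)%R -> qpoch q q k <> 0.
Proof.
  intros Hq. apply qpoch_neq0. intros m _ E. apply (Cpow_neq1 q (S m) Hq); [lia|].
  rewrite Cpow_S. replace (q * q ^ m) with (1 - (1 - q * q ^ m)) by ring. rewrite E. ring.
Qed.

(* Stated at type [C] rather than [AbelianMonoid.sort C_AbelianMonoid], so that [ring] applies. *)
Lemma sum_n_succ (f : nat -> C) (n : nat) :
  @eq C (sum_n f (S n)) (sum_n f n + f (S n)).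
Proof. exact (sum_Sn f n). Qed.

Lemma sum_n_telescoping (f g G : nat -> C) (c : C) (n : nat) :
  (forall k, (k <= n)%nat -> f k = c * g k + (G (S k) - G k)) ->
  @eq C (sum_n f n) (c * sum_n g n + (G (S n) - G 0%nat)).
Proof.
  induction n as [|n IH]; intros Hf.
  - rewrite !sum_O. apply Hf. lia.
  - rewrite !sum_n_succ, IH, Hf by auto. ring.
Qed.

Lemma is_series_finite_support (f : nat -> C) (n : nat) :
  (forall k, (n < k)%nat -> f k = 0) ->
  is_series (V := C_NormedModule) f (sum_n f n).
Proof.
  intros Hf.
  assert (Hconst : forall k, (n <= k)%nat -> @eq C (sum_n f k) (sum_n f n)).
  { induction 1 as [|k Hk IH]; [reflexivity|].
    rewrite sum_n_succ, IH, Hf by lia. ring. }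
  apply (filterlim_ext_loc (fun _ => sum_n f n)); [|apply filterlim_const].
  exists n. intros k Hk. symmetry. apply Hconst, Hk.
Qed.

Section Summation.

Variables q alpha a : C.
Hypotheses (hq0 : q <> 0) (hq1 : (Cmod q < 1)%R) (ha : a <> 0)
  (halpha0 : alpha <> 0) (halpha1 : alpha <> 1).

Lemma one_sub_alpha_neq0 : 1 - alpha <> 0.
Proof. intros E. apply halpha1. rewrite <- (Cplus_0_r alpha), <- E. ring. Qed.

Definition term (n k : nat) : C :=
  qpoch (/ q ^ n) q k * qpoch (alpha * q ^ (n + 1)) q k * q ^ k
  / qpoch (q ^ 2 / a) q k.

Definition prefactor (n : nat) : C :=
  q ^ (n * n + 2 * n) * (qpochs [q; alpha * a] q n / qpochs [q * alpha; q ^ 2 / a] q n)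
  * (alpha / a) ^ n.

Definition summand (j : nat) : C :=
  (1 - alpha * q ^ (2 * j)) * qpochs [alpha; q / a] q j * (a / alpha) ^ j
  * / (q ^ (j * j + j)) / ((1 - alpha) * qpochs [q; alpha * a] q j).

Definition ratio (m : nat) : C :=
  let x := q ^ S m in
  q * x ^ 2 * (1 - x) * (1 - alpha * a * x / q) * alpha
  / ((1 - alpha * x) * (1 - q * x / a) * a).

Definition cert_coef (m : nat) : C :=
  let x := q ^ S m in - x * (1 - alpha * x ^ 2) / ((a - q * x) * (1 - alpha * x)).

(* Equal to (a - q^(k+1)) / (q^2/a;q)_k (see [cert_tail_eq]), with the last factor of the
   denominator already cancelled in the successor clause: thus [term_succ] at k = m + 1 needs
   no assumption on (q^2/a;q)_(m+2). *)
Definition cert_tail (k : nat) : C :=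
  match k with
  | O => a - q
  | S j => a / qpoch (q ^ 2 / a) q j
  end.

Definition cert (m k : nat) : C :=
  cert_coef m * qpoch (/ q ^ S m) q k * qpoch (alpha * q ^ S m) q k * cert_tail k.

Lemma cert_vanish (m k : nat) : (S m < k)%nat -> cert m k = 0.
Proof. intros Hk. unfold cert. rewrite (qpoch_inv_pow_vanish q (S m) k hq0 Hk). ring. Qed.

Lemma cert_tail_eq (k : nat) :
  qpoch (q ^ 2 / a) q k <> 0 -> cert_tail k = (a - q * q ^ k) / qpoch (q ^ 2 / a) q k.
Proof.
  destruct k as [|j]; intros H; cbn [cert_tail qpoch] in *.
  - rewrite Cmult_1_r. field.
  - assert (qpoch (q ^ 2 / a) q j <> 0) by (intro E; apply H; rewrite E; ring).
    assert (1 - q ^ 2 / a * q ^ j <> 0) by (intro E; apply H; rewrite E; ring).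
    assert (a - q ^ 2 * q ^ j <> 0).
    { apply Csub_neq0_of_div; auto.
      now replace (q ^ 2 * q ^ j / a) with (q ^ 2 / a * q ^ j) by (field; auto). }
    rewrite (Cpow_S q j). field. auto.
Qed.

Section Step.

Variable m : nat.
Hypotheses (H1 : qpoch (q * alpha) q (S m) <> 0) (H2 : qpoch (q ^ 2 / a) q (S m) <> 0)
  (H3 : qpoch (alpha * a) q (S m) <> 0).

Lemma alpha_factor_neq0 : 1 - alpha * q ^ S m <> 0.
Proof.
  intros E. apply (qpoch_factor_neq0 _ _ m _ (Nat.lt_succ_diag_r m) H1).
  rewrite <- E, Cpow_S. ring.
Qed.

Lemma a_factor_neq0 : a - q * q ^ S m <> 0.
Proof.
  apply Csub_neq0_of_div; auto.
  replace (q * q ^ S m / a) with (q ^ 2 / a * q ^ m) by (rewrite (Cpow_S q m); field; auto).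
  exact (qpoch_factor_neq0 _ _ m _ (Nat.lt_succ_diag_r m) H2).
Qed.

Lemma prefactor_succ : prefactor (S m) = ratio m * prefactor m.
Proof.
  assert (Hexp : q ^ (S m * S m + 2 * S m) = q ^ (m * m + 2 * m) * q ^ S m * q ^ S m * q).
  { replace (S m * S m + 2 * S m)%nat with (m * m + 2 * m + S m + S m + 1)%nat by lia.
    now rewrite !Cpow_add_r, Cpow_1_r. }
  assert (qpoch (q * alpha) q m <> 0) by exact (qpoch_le_neq0 _ _ m _ (Nat.le_succ_diag_r m) H1).
  assert (qpoch (q ^ 2 / a) q m <> 0) by exact (qpoch_le_neq0 _ _ m _ (Nat.le_succ_diag_r m) H2).
  assert (q ^ m <> 0) by (apply Cpow_nz; auto).
  assert (q ^ (m * m + 2 * m) <> 0) by (apply Cpow_nz; auto).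
  pose proof alpha_factor_neq0. pose proof a_factor_neq0.
  unfold prefactor, ratio, qpochs. cbn [fold_right qpoch]. rewrite Hexp.
  cbv zeta. rewrite (Cpow_S (alpha / a) m), (Cpow_S q m) in *. field. repeat split; auto.
Qed.

Lemma prefactor_summand_succ : prefactor (S m) * summand (S m) = - cert m 0.
Proof.
  assert (Hexp : q ^ (S m * S m + 2 * S m) = q ^ (S m * S m + S m) * q ^ S m).
  { now replace (S m * S m + 2 * S m)%nat with (S m * S m + S m + S m)%nat by lia;
      rewrite Cpow_add_r. }
  assert (Hexp2 : q ^ (2 * S m) = q ^ S m * q ^ S m).
  { now replace (2 * S m)%nat with (S m + S m)%nat by lia; rewrite Cpow_add_r. }
  assert (Halpha : qpoch alpha q (S m) = (1 - alpha) * qpoch (q * alpha) q m).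
  { rewrite qpoch_succ_head. now replace (alpha * q) with (q * alpha) by ring. }
  assert (Hqa : qpoch (q / a) q (S m) = (1 - q / a) * qpoch (q ^ 2 / a) q m).
  { rewrite qpoch_succ_head. now replace (q / a * q) with (q ^ 2 / a) by (field; auto). }
  assert (Halpha_a : alpha / a <> 0).
  { intros E. apply halpha0. replace alpha with (alpha / a * a) by (field; auto).
    rewrite E. ring. }
  assert (Hinv : (a / alpha) ^ S m = / (alpha / a) ^ S m).
  { rewrite <- Cpow_inv by auto. f_equal. field. auto. }
  pose proof one_sub_alpha_neq0.
  assert (qpoch (q * alpha) q m <> 0) by exact (qpoch_le_neq0 _ _ m _ (Nat.le_succ_diag_r m) H1).
  assert (qpoch (q ^ 2 / a) q m <> 0) by exact (qpoch_le_neq0 _ _ m _ (Nat.le_succ_diag_r m) H2).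
  assert (qpoch q q (S m) <> 0) by (apply qpoch_q_neq0; auto).
  assert (q ^ (S m * S m + S m) <> 0) by (apply Cpow_nz; auto).
  assert ((alpha / a) ^ S m <> 0) by (apply Cpow_nz; auto).
  pose proof alpha_factor_neq0. pose proof a_factor_neq0.
  change (cert m 0) with (cert_coef m * 1 * 1 * (a - q)).
  unfold prefactor, summand, cert_coef, qpochs. cbn [fold_right].
  rewrite Hexp, Hexp2, Halpha, Hqa, Hinv, (qpoch_succ (q * alpha)), (qpoch_succ (q ^ 2 / a)).
  cbv zeta. rewrite (Cpow_S q m) in *.
  field. repeat split; auto.
Qed.

Lemma term_succ (k : nat) : (k <= S m)%nat ->
  term (S m) k = ratio m * term m k + (cert m (S k) - cert m k).
Proof.
  intros Hk.
  assert (Hx0 : q ^ S m <> 0) by (apply Cpow_nz; auto).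
  pose proof (Cpow_neq1 q (S m) hq1 (Nat.lt_0_succ m)) as Hx_ne1.
  assert (Hx1 : 1 - / q ^ S m <> 0).
  { set (x := q ^ S m) in *. intros E. apply Hx_ne1.
    replace x with (x - x * (1 - / x)) by (rewrite E; ring). field. exact Hx0. }
  assert (Hshift1 : qpoch (alpha * q ^ (S m + 1)) q k
    = qpoch (alpha * q ^ S m) q k * (1 - alpha * q ^ S m * q ^ k) / (1 - alpha * q ^ S m)).
  { rewrite <- qpoch_base_mulq by exact alpha_factor_neq0.
    f_equal. rewrite Nat.add_1_r, (Cpow_S q (S m)), (Cpow_S q m). ring. }
  assert (Hshift2 : qpoch (/ q ^ m) q k
    = qpoch (/ q ^ S m) q k * (1 - / q ^ S m * q ^ k) / (1 - / q ^ S m)).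
  { rewrite <- qpoch_base_mulq by exact Hx1. f_equal. rewrite Cpow_S. field.
    split; [apply Cpow_nz|]; auto. }
  pose proof (qpoch_le_neq0 _ _ k _ Hk H2).
  pose proof alpha_factor_neq0. pose proof a_factor_neq0 as Ha_factor.
  unfold term, cert. rewrite Hshift1, Hshift2, Nat.add_1_r, (cert_tail_eq k) by auto.
  cbn [cert_tail]. rewrite !qpoch_succ.
  unfold ratio, cert_coef. cbv zeta.
  set (x := q ^ S m) in *. set (y := q ^ k).
  assert (1 - q * x / a <> 0).
  { intros E. apply Ha_factor. replace (a - q * x) with (a * (1 - q * x / a)) by (field; auto).
    rewrite E. ring. }
  assert (x - 1 <> 0).
  { intros E. apply Hx_ne1. replace x with (x - 1 + 1) by ring. rewrite E. ring. }
  field. repeat split; auto.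
Qed.

End Step.

Lemma term_vanish (n k : nat) : (n < k)%nat -> term n k = 0.
Proof. intros Hk. unfold term. rewrite (qpoch_inv_pow_vanish q n k hq0 Hk). unfold Cdiv. ring. Qed.

Lemma sum_term_eq (n : nat) :
  qpoch (q * alpha) q n <> 0 -> qpoch (q ^ 2 / a) q n <> 0 -> qpoch (alpha * a) q n <> 0 ->
  @eq C (sum_n (term n) n) (prefactor n * sum_n summand n).
Proof.
  induction n as [|m IH]; intros H1 H2 H3.
  - rewrite !sum_O. unfold term, prefactor, summand, qpochs.
    cbn [fold_right qpoch Cpow Nat.mul Nat.add]. field. exact one_sub_alpha_neq0.
  - specialize (IH (qpoch_le_neq0 _ _ m _ (Nat.le_succ_diag_r m) H1)
                   (qpoch_le_neq0 _ _ m _ (Nat.le_succ_diag_r m) H2)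
                   (qpoch_le_neq0 _ _ m _ (Nat.le_succ_diag_r m) H3)).
    rewrite (sum_n_telescoping (term (S m)) (term m) (cert m) (ratio m) (S m))
      by (intros k Hk; apply term_succ; auto).
    rewrite sum_n_succ, IH, (term_vanish m (S m)), (cert_vanish m (S (S m))) by lia.
    rewrite sum_n_succ, (Cmult_plus_distr_l (prefactor (S m))), prefactor_summand_succ,
      prefactor_succ by auto.
    ring.
Qed.

Lemma phi_term_eq (n k : nat) : qpoch (q ^ 2 / a) q n <> 0 ->
  phi_term [/ q ^ n; alpha * q ^ (n + 1); q] [q ^ 2 / a; RtoC 0] q q k = term n k.
Proof.
  intros H2. unfold phi_term, qpochs, term. cbn [fold_right length].
  change (1 + Z.of_nat 2 - Z.of_nat 3)%Z with 0%Z. cbn [Czpow]. rewrite qpoch_zero.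
  pose proof (qpoch_q_neq0 q k hq1).
  destruct (Nat.le_gt_cases k n) as [Hk|Hk].
  - pose proof (qpoch_le_neq0 _ _ k _ Hk H2). field. auto.
  - rewrite (qpoch_inv_pow_vanish q n k hq0 Hk). unfold Cdiv. ring.
Qed.

Lemma is_phi_sum (n : nat) :
  qpoch (q * alpha) q n <> 0 -> qpoch (q ^ 2 / a) q n <> 0 -> qpoch (alpha * a) q n <> 0 ->
  is_phi [/ q ^ n; alpha * q ^ (n + 1); q] [q ^ 2 / a; RtoC 0] q q
    (prefactor n * sum_n summand n).
Proof.
  intros H1 H2 H3. unfold is_phi. rewrite <- sum_term_eq by auto.
  apply (is_series_ext (term n)); [intros k; symmetry; apply phi_term_eq, H2|].
  apply is_series_finite_support, term_vanish.
Qed.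

End Summation.

Theorem theorem2p6 (q alpha a : C) (n : nat)
  (hq0 : q <> 0) (hq1 : (Cmod q < 1)%R)
  (ha : a <> 0) (halpha0 : alpha <> 0) (halpha1 : alpha <> 1)
  (h1 : qpoch (q * alpha) q n <> 0)
  (h2 : qpoch (q ^ 2 / a) q n <> 0)
  (h3 : qpoch (alpha * a) q n <> 0) :
  is_phi [/ q ^ n; alpha * q ^ (n + 1); q] [q ^ 2 / a; RtoC 0] q q
    (q ^ (n * n + 2 * n)
     * (qpochs [q; alpha * a] q n / qpochs [q * alpha; q ^ 2 / a] q n)
     * (alpha / a) ^ n
     * sum_n (fun j =>
         (1 - alpha * q ^ (2 * j)) * qpochs [alpha; q / a] q j * (a / alpha) ^ j
           * / (q ^ (j * j + j))
         / ((1 - alpha) * qpochs [q; alpha * a] q j)) n).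
Proof. exact (is_phi_sum q alpha a hq0 hq1 ha halpha0 halpha1 n h1 h2 h3). Qed.
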